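(* A complete orthomodular lattice $\mathbb{L}$ is of finite type if and only if $a\wedge\bigvee_{k\in K}a_k=\bigvee_{k\in K}(a\wedge a_k)$ for all $a\in\mathbb{L}$ and all increasing families $(a_k)_{k\in K}$ in $\mathbb{L}$.
   Context: An orthomodular lattice is a lattice with least element $0$, greatest element $1$ and a map $a\mapsto a^\perp$ with $a\wedge a^\perp=0$, $a\vee a^\perp=1$, $(a\wedge b)^\perp=a^\perp\vee b^\perp$, $(a\vee b)^\perp=a^\perp\wedge b^\perp$, $a^{\perp\perp}=a$, such that $b\le a$ implies $b=a\wedge(a^\perp\vee b)$. An increasing family is one indexed by a directed set $K$ with $k\le l\Rightarrow a_k\le a_l$. A quasipoint in a lattice $\mathbb{L}$ with least element $0$ is a maximal (w.r.t. inclusion) subset $\mathfrak{B}\subseteq\mathbb{L}$ such that $\mathfrak{B}\neq\emptyset$, $0\notin\mathfrak{B}$, and for all $a,b\in\mathfrak{B}$ there is $c\in\mathfrak{B}$ with $c\le a\wedge b$. $\mathcal{Q}(\mathbb{L})$ denotes the set of quasipoints; for $a\in\mathbb{L}$ put $\mathcal{Q}_a(\mathbb{L})=\{\mathfrak{B}\in\mathcal{Q}(\mathbb{L}) : a\in\mathfrak{B}\}$. The Stone spectrum is $\mathcal{Q}(\mathbb{L})$ with the topology having the sets $\mathcal{Q}_a(\mathbb{L})$ as a basis. A complete lattice $\mathbb{L}$ is of finite type if $\overline{\bigcup_{k\in K}\mathcal{Q}_{a_k}(\mathbb{L})}=\mathcal{Q}_{\bigvee_{k\in K}a_k}(\mathbb{L})$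 for every increasing family $(a_k)_{k\in K}$. *)

Record CompleteOML := {
  car :> Type;
  le : car -> car -> Prop;
  meet : car -> car -> car;
  join : car -> car -> car;
  orth : car -> car;
  bot : car;
  top : car;
  sup : (car -> Prop) -> car;
  le_refl : forall x, le x x;
  le_trans : forall x y z, le x y -> le y z -> le x z;
  le_antisym : forall x y, le x y -> le y x -> x = y;
  meet_glb : forall x y z, le z (meet x y) <-> (le z x /\ le z y);
  join_lub : forall x y z, le (join x y) z <-> (le x z /\ le y z);
  sup_lub : forall (S : car -> Prop) z,
      le (sup S) z <-> (forall x, S x -> le x z);
  bot_least : forall x, le bot x;
  top_greatest : forall x, le x top;
  orth_meet : forall a, meet a (orth a) = bot;
  orth_join : forall a, join a (orth a) = top;
  orth_deMorgan_meet : forall a b, orth (meet a b) = join (orth a) (orth b);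
  orth_deMorgan_join : forall a b, orth (join a b) = meet (orth a) (orth b);
  orth_invol : forall a, orth (orth a) = a;
  orthomodular : forall a b, le b a -> b = meet a (join (orth a) b)
}.

Arguments le {c} _ _.
Arguments meet {c} _ _.
Arguments join {c} _ _.
Arguments orth {c} _.
Arguments bot {c}.
Arguments top {c}.
Arguments sup {c} _.

Definition directed (K : Type) (leK : K -> K -> Prop) : Prop :=
  (forall k, leK k k) /\
  (forall k l m, leK k l -> leK l m -> leK k m) /\
  inhabited K /\
  (forall k l, exists m, leK k m /\ leK l m).

Definition increasing_family {L : CompleteOML} (K : Type)
  (leK : K -> K -> Prop) (a : K -> L) : Prop :=
  directed K leK /\ (forall k l, leK k l -> le (a k) (a l)).

Definition fam_sup {L : CompleteOML} {K : Type} (a : K -> L) : L :=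
  sup (fun x => exists k, a k = x).

Definition filter_base {L : CompleteOML} (B : L -> Prop) : Prop :=
  (exists x, B x) /\ ~ B bot /\
  (forall a b, B a -> B b -> exists c, B c /\ le c (meet a b)).

Definition quasipoint {L : CompleteOML} (B : L -> Prop) : Prop :=
  filter_base B /\
  (forall C : L -> Prop, filter_base C -> (forall x, B x -> C x) ->
     forall x, C x -> B x).

Definition Qa {L : CompleteOML} (a : L) : (L -> Prop) -> Prop :=
  fun B => quasipoint B /\ B a.

Definition stone_open {L : CompleteOML} (U : (L -> Prop) -> Prop) : Prop :=
  (forall B, U B -> quasipoint B) /\
  (forall B, U B -> exists a, Qa a B /\ forall C, Qa a C -> U C).

Definition stone_closure {L : CompleteOML} (S : (L -> Prop) -> Prop)
  : (L -> Prop) -> Prop :=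
  fun B => quasipoint B /\
    forall U, stone_open U -> U B -> exists C, U C /\ S C.

Definition finite_type (L : CompleteOML) : Prop :=
  forall (K : Type) (leK : K -> K -> Prop) (a : K -> L),
    increasing_family K leK a ->
    forall B : L -> Prop,
      stone_closure (fun C => exists k, Qa (a k) C) B <-> Qa (fam_sup a) B.

From Stdlib Require Import Classical.
From mathcomp Require classical_sets.

(* A quasipoint lies in the closure of the union of the [Q_{a_k}] iff each of
   its members meets some [a_k] nontrivially; such a quasipoint always contains
   [sup a_k], so finite type amounts to the converse inclusion.  Given
   distributivity, a quasipoint containing [b] and [sup a_k] contains
   [b /\ sup a_k = sup (b /\ a_k)], which is therefore nonzero.  Conversely,
   [s := sup (a /\ a_k) <= a /\ sup a_k =: c], and if [s <> c] orthomodularity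
   gives [d := s^perp /\ c <> 0]; a quasipoint through [d] contains [sup a_k],
   yet [d /\ a_k <= s^perp /\ s = 0] for every [k]. *)

Section Lattice.
Variable L : CompleteOML.
Implicit Types x y z : L.

Lemma meet_lel x y : le (meet x y) x.
Proof. apply (proj1 (meet_glb L x y (meet x y)) (le_refl L _)). Qed.

Lemma meet_ler x y : le (meet x y) y.
Proof. apply (proj1 (meet_glb L x y (meet x y)) (le_refl L _)). Qed.

Lemma le_meet x y z : le z x -> le z y -> le z (meet x y).
Proof. intros; apply (proj2 (meet_glb L x y z)); auto. Qed.

Lemma meet_mono_r x y z : le y z -> le (meet x y) (meet x z).
Proof.
intros Hyz; apply le_meet; [apply meet_lel |].
apply le_trans with y; [apply meet_ler | exact Hyz].
Qed.

Lemma meet_idPl x y : le x y -> meet x y = x.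
Proof.
intros Hxy; apply le_antisym; [apply meet_lel |].
apply le_meet; [apply le_refl | exact Hxy].
Qed.

Lemma meet_top x : meet x top = x.
Proof. apply meet_idPl, top_greatest. Qed.

Lemma join_bot x : join bot x = x.
Proof.
apply le_antisym.
- apply (proj2 (join_lub L _ _ _)); split; [apply bot_least | apply le_refl].
- apply (proj1 (join_lub L bot x _) (le_refl L _)).
Qed.

Lemma le_bot_eq x : le x bot -> x = bot.
Proof. intros; apply le_antisym; [assumption | apply bot_least]. Qed.

Lemma le_fam_sup (K : Type) (a : K -> L) k : le (a k) (fam_sup a).
Proof. apply (proj1 (sup_lub L _ (fam_sup a)) (le_refl L _)); exists k; reflexivity. Qed.

Lemma fam_sup_le (K : Type) (a : K -> L) z :
  (forall k, le (a k) z) -> le (fam_sup a) z.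
Proof. intros Hz; apply (proj2 (sup_lub L _ z)); intros x [k <-]; apply Hz. Qed.

Lemma orth_bot : orth (@bot L) = top.
Proof. rewrite <- (join_bot (orth bot)); apply orth_join. Qed.

Lemma orth_antitone x y : le x y -> le (orth y) (orth x).
Proof.
intros Hxy; rewrite <- (meet_idPl x y Hxy), orth_deMorgan_meet.
apply (proj1 (join_lub L _ _ _) (le_refl L _)).
Qed.

Lemma orthomodular_eq x y : le x y -> meet (orth x) y = bot -> x = y.
Proof.
intros Hxy Hd.
assert (Hoy : orth y = orth x).
{ rewrite (orthomodular L (orth x) (orth y) (orth_antitone x y Hxy)).
  rewrite <- (orth_invol L (join (orth (orth x)) (orth y))).
  rewrite orth_deMorgan_join, !orth_invol, Hd, orth_bot; apply meet_top. }
rewrite <- (orth_invol L x), <- (orth_invol L y), Hoy; reflexivity.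
Qed.

End Lattice.

Section Quasipoints.
Variable L : CompleteOML.
Implicit Types (x y z : L) (B : L -> Prop).

Definition down_directed B : Prop :=
  forall x y, B x -> B y -> exists z, B z /\ le z (meet x y).

(* Nonempty members of this family are exactly the filter bases containing
   [x]; admitting the empty set makes it closed under unions of all chains. *)
Definition directed_through x B : Prop :=
  ~ B bot /\ down_directed B /\ (forall y, B y -> B x).

Section Quasipoint.
Variable B : L -> Prop.
Hypothesis qB : quasipoint B.

Lemma quasipoint_up x y : B x -> le x y -> B y.
Proof.
destruct qB as [[[w Bw] [nBbot Bdir]] Bmax]; intros Bx Hxy.
apply (Bmax (fun z => exists x, B x /\ le x z)); [split; [|split] | |].
- exists w, w; split; [assumption | apply le_refl].
- intros [v [Bv Hv]]; apply nBbot; rewrite <- (le_bot_eq L v Hv); assumption.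
- intros u v [u' [Bu Hu]] [v' [Bv Hv]].
  destruct (Bdir u' v' Bu Bv) as [c [Bc Hc]].
  exists c; split; [exists c; split; [assumption | apply le_refl] |].
  apply le_trans with (meet u' v'); [assumption |].
  apply le_meet; eapply le_trans; try eassumption; [apply meet_lel | apply meet_ler].
- intros v Bv; exists v; split; [assumption | apply le_refl].
- exists x; split; assumption.
Qed.

Lemma quasipoint_meet x y : B x -> B y -> B (meet x y).
Proof.
intros Bx By; destruct qB as [[_ [_ Bdir]] _].
destruct (Bdir x y Bx By) as [z [Bz Hz]]; apply (quasipoint_up z); assumption.
Qed.

Lemma quasipoint_meet_neq_bot x y : B x -> B y -> meet x y <> bot.
Proof.
intros Bx By E; destruct qB as [[_ [nBbot _]] _].
apply nBbot; rewrite <- E; apply quasipoint_meet; assumption.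
Qed.

(* Maximality: otherwise [{y | x /\ b <= y for some b in B}] is a larger
   filter base. *)
Lemma quasipoint_disjoint x : ~ B x -> exists b, B b /\ meet x b = bot.
Proof.
intros nBx; apply NNPP; intros Hn.
destruct qB as [[[w Bw] [_ Bdir]] Bmax].
apply nBx, (Bmax (fun y => exists b, B b /\ le (meet x b) y));
  [split; [|split] | |].
- exists (meet x w), w; split; [assumption | apply le_refl].
- intros [b [Bb Hb]]; apply Hn; exists b; split; [| apply le_bot_eq]; assumption.
- intros y1 y2 [b1 [B1 H1]] [b2 [B2 H2]].
  destruct (Bdir b1 b2 B1 B2) as [c [Bc Hc]].
  exists (meet x c); split; [exists c; split; [assumption | apply le_refl] |].
  apply le_meet; [apply le_trans with (meet x b1) | apply le_trans with (meet x b2)];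
    try assumption; apply meet_mono_r; apply le_trans with (meet b1 b2);
    try assumption; [apply meet_lel | apply meet_ler].
- intros y By; exists y; split; [assumption | apply meet_ler].
- exists w; split; [assumption | apply meet_lel].
Qed.

End Quasipoint.

Lemma directed_through_chain_union x (F : (L -> Prop) -> Prop) :
  (forall X, F X -> directed_through x X) ->
  (forall X Y, F X -> F Y -> (forall y, X y -> Y y) \/ (forall y, Y y -> X y)) ->
  directed_through x (fun y => exists2 X, F X & X y).
Proof.
intros HF Ftot; split; [| split].
- intros [X FX Xbot]; apply (proj1 (HF X FX)); assumption.
- intros u v [X FX Xu] [Y FY Yv].
  destruct (Ftot X Y FX FY) as [XY | YX].
  + destruct (proj1 (proj2 (HF Y FY)) u v (XY u Xu) Yv) as [c [Yc Hc]].
    exists c; split; [exists Y |]; assumption.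
  + destruct (proj1 (proj2 (HF X FX)) u v Xu (YX v Yv)) as [c [Xc Hc]].
    exists c; split; [exists X |]; assumption.
- intros y [X FX Xy]; exists X; [| apply (proj2 (proj2 (HF X FX)) y)]; assumption.
Qed.

Lemma quasipoint_exists x : x <> bot -> exists B, Qa x B.
Proof.
intros Hx.
destruct (@classical_sets.Zorn_bigcup L (directed_through x)) as [A [HA Amax]].
{ intros F FP Ftot; apply directed_through_chain_union; assumption. }
assert (Hmax : forall C, directed_through x C -> (forall y, A y -> C y) ->
                 forall y, C y -> A y).
{ intros C HC AC y Cy; apply NNPP; intros nAy.
  apply (Amax C); [split; [| intros CA; apply nAy, CA] |]; assumption. }
destruct HA as [nAbot [Adir Ax]].
assert (xA : A x).
{ apply NNPP; intros nAx.
  apply nAx, (Hmax (le x)); [split; [| split] | | apply le_refl].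
  - intros H; apply Hx, le_bot_eq; assumption.
  - intros u v Hu Hv; exists x; split; [apply le_refl | apply le_meet; assumption].
  - intros; apply le_refl.
  - intros y Ay; exfalso; apply nAx, (Ax y Ay). }
exists A; split; [split; [split; [exists x | split] |] |]; try assumption.
intros C [_ [nCbot Cdir]] AC; apply Hmax; [split; [| split] |]; try assumption.
intros; apply AC, xA.
Qed.

End Quasipoints.

Section StoneSpectrum.
Variable L : CompleteOML.

Lemma Qa_open (b : L) : stone_open (Qa b).
Proof. split; [intros B [QB _]; exact QB | intros B HB; exists b; auto]. Qed.

Section Family.
Variables (K : Type) (a : K -> L).

Let Q_union : (L -> Prop) -> Prop := fun C => exists k, Qa (a k) C.

Lemma stone_closure_Q_unionE B :
  stone_closure Q_union B <->
  quasipoint B /\ (forall b, B b -> exists k, meet b (a k) <> bot).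
Proof.
split.
- intros [QB Hcl]; split; [exact QB |]; intros b Bb.
  destruct (Hcl (Qa b) (Qa_open b) (conj QB Bb)) as [C [[QC Cb] [k [_ Cak]]]].
  exists k; apply (quasipoint_meet_neq_bot L C); assumption.
- intros [QB Hcov]; split; [exact QB |]; intros U HU UB.
  destruct (proj2 HU B UB) as [b [[_ Bb] QbU]].
  destruct (Hcov b Bb) as [k Hk].
  destruct (quasipoint_exists L _ Hk) as [C [QC Cbk]].
  exists C; split; [apply QbU | exists k]; split; try assumption;
    apply (quasipoint_up L C QC (meet b (a k))); try assumption;
    [apply meet_lel | apply meet_ler].
Qed.

Lemma Qa_fam_sup_of_closure B : stone_closure Q_union B -> Qa (fam_sup a) B.
Proof.
intros HB; destruct (proj1 (stone_closure_Q_unionE B) HB) as [QB Hcov].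
split; [exact QB |].
apply NNPP; intros nBs.
destruct (quasipoint_disjoint L B QB _ nBs) as [b [Bb Hsb]].
destruct (Hcov b Bb) as [k Hk]; apply Hk, le_bot_eq; rewrite <- Hsb.
apply le_meet; [| apply meet_lel].
apply le_trans with (a k); [apply meet_ler | apply le_fam_sup].
Qed.

Lemma closure_of_Qa_fam_sup :
  (forall b, meet b (fam_sup a) = fam_sup (fun k => meet b (a k))) ->
  forall B, Qa (fam_sup a) B -> stone_closure Q_union B.
Proof.
intros Hdistr B [QB Bs]; apply stone_closure_Q_unionE; split; [exact QB |].
intros b Bb; apply NNPP; intros Hn.
apply (quasipoint_meet_neq_bot L B QB b (fam_sup a) Bb Bs).
rewrite Hdistr; apply le_bot_eq, fam_sup_le; intros k.
destruct (classic (meet b (a k) = bot)) as [E | E].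
- rewrite E; apply le_refl.
- exfalso; apply Hn; exists k; exact E.
Qed.

Lemma distributive_of_closure :
  (forall B, Qa (fam_sup a) B -> stone_closure Q_union B) ->
  forall c, meet c (fam_sup a) = fam_sup (fun k => meet c (a k)).
Proof.
intros Hcl c; set (s := fam_sup (fun k => meet c (a k))).
symmetry; apply orthomodular_eq.
{ apply fam_sup_le; intros k; apply meet_mono_r, le_fam_sup. }
apply NNPP; intros Hd; set (d := meet (orth s) (meet c (fam_sup a))) in Hd.
destruct (quasipoint_exists L d Hd) as [B [QB Bd]].
assert (Bs : B (fam_sup a)).
{ apply (quasipoint_up L B QB d); [exact Bd |].
  apply le_trans with (meet c (fam_sup a)); apply meet_ler. }
destruct (proj1 (stone_closure_Q_unionE B) (Hcl B (conj QB Bs))) as [_ Hcov].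
destruct (Hcov d Bd) as [k Hk]; apply Hk, le_bot_eq.
rewrite <- (orth_meet L s); apply le_meet.
- apply le_trans with (meet c (a k)); [| apply (le_fam_sup L _ (fun k => meet c (a k)))].
  apply le_meet; [| apply meet_ler].
  apply le_trans with (meet c (fam_sup a)); [apply le_trans with d |];
    [apply meet_lel | apply meet_ler | apply meet_lel].
- apply le_trans with d; apply meet_lel.
Qed.

Lemma closure_Q_union_eq_Qa_fam_sup_iff :
  (forall B, stone_closure Q_union B <-> Qa (fam_sup a) B) <->
  (forall c, meet c (fam_sup a) = fam_sup (fun k => meet c (a k))).
Proof.
split.
- intros Heq; apply distributive_of_closure; intros B; apply Heq.
- intros Hdistr B; split;
    [apply Qa_fam_sup_of_closure | apply closure_of_Qa_fam_sup; exact Hdistr].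
Qed.

End Family.
End StoneSpectrum.

Theorem lemma3p21 (L : CompleteOML) :
  finite_type L <->
  (forall (a : L) (K : Type) (leK : K -> K -> Prop) (ak : K -> L),
     increasing_family K leK ak ->
     meet a (fam_sup ak) = fam_sup (fun k => meet a (ak k))).
Proof.
split.
- intros Hfin a K leK ak Hinc.
  exact (proj1 (closure_Q_union_eq_Qa_fam_sup_iff L K ak) (Hfin K leK ak Hinc) a).
- intros Hdistr K leK ak Hinc.
  apply (closure_Q_union_eq_Qa_fam_sup_iff L K ak).
  intros a; exact (Hdistr a K leK ak Hinc).
Qed.
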